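(* The set $\mathcal{M}^+(X)$ of fully-supported Borel probability measures on $X=A^{\mathbb{N}}$, where $A$ is a finite alphabet with at least two symbols, is non-separable with respect to the projective distance \[ \rho(\mu,\nu)=\sup_{n\in\mathbb{N}}\max_{\pmb{a}\in A^n}\frac{1}{n}\left|\log\frac{\mu[\pmb{a}]}{\nu[\pmb{a}]}\right|. \]
   Context: $X=A^{\mathbb{N}}$ carries the product topology and its Borel $\sigma$-algebra. For $\pmb{a}=a_1\cdots a_n\in A^n$, $[\pmb{a}]=\{\pmb{x}\in X:\ x_1\cdots x_n=\pmb{a}\}$. $\mathcal{M}^+(X)$ is the set of Borel probability measures $\mu$ on $X$ with $\mu[\pmb{a}]>0$ for all finite words $\pmb{a}$. *)

From HB Require Import structures.
From mathcomp Require Import all_boot all_order all_algebra.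
From mathcomp Require Import all_classical all_reals all_analysis.
Set Implicit Arguments. Unset Strict Implicit. Unset Printing Implicit Defensive.
Import Order.TTheory GRing.Theory Num.Theory.
Local Open Scope classical_set_scope.
Local Open Scope ring_scope.

(* The alphabet A (a finite type), pointed at a0 (the measurable-structure
   hierarchy of MathComp-Analysis requires a pointed carrier). *)
Definition alph (A : finType) (a0 : A) : Type := A.
HB.instance Definition _ (A : finType) (a0 : A) := Finite.on (alph a0).
HB.instance Definition _ (A : finType) (a0 : A) := isPointed.Build (alph a0) a0.

Definition seqspace (A : finType) (a0 : A) : Type :=
  {ptws nat -> discrete_topology (alph a0)}.

Definition borelX (A : finType) (a0 : A) : Type :=
  g_sigma_algebraType (@open (seqspace a0)).

Definition cyl (A : finType) (a0 : A) (n : nat) (w : n.-tuple A) : set (borelX a0) :=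
  [set x | forall i : 'I_n, x i = tnth w i].
Arguments cyl {A} a0 {n} w.

Definition fully_supported (R : realType) (A : finType) (a0 : A)
  (mu : probability (borelX a0) R) : Prop :=
  forall (n : nat) (w : n.-tuple A), (0 < mu (cyl a0 w))%E.

Definition proj_dist (R : realType) (A : finType) (a0 : A)
  (mu nu : probability (borelX a0) R) : \bar R :=
  ereal_sup [set y : \bar R | exists (n : nat) (w : n.+1.-tuple A),
     y = ((n.+1%:R)^-1 * `| ln (fine (mu (cyl a0 w)) / fine (nu (cyl a0 w))) |)%:E].

From HB Require Import structures.
From mathcomp Require Import all_boot all_order all_algebra.
From mathcomp Require Import all_classical all_reals all_analysis.
From mathcomp Require Import zify.
Import Order.TTheory GRing.Theory Num.Theory.
Local Open Scope classical_set_scope.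
Local Open Scope ring_scope.
Set Implicit Arguments. Unset Strict Implicit.

(* For t : nat -> bool let mu_t give mass 2^-(i+1) to the i-th point of a fixed list.
   The even-indexed points run through all finite words (padded with a0), so every mu_t
   is fully supported.  The point of index 2k+1 has a b at (0-based) position 2k+2 and a
   second b right after it exactly when t k holds.  Let u_k be the word of length
   n = 2k+4 with a single b at position 2k+2.  If t k is false that point lies in [u_k],
   so mu_t[u_k] >= 2^-(2k+2); if t k is true, every point of [u_k] has index at least
   4k+6, so mu_t[u_k] <= 2^-(4k+6) = 2^-n 2^-(2k+2).  Hence distinct mu_s, mu_t are at
   projective distance at least log 2, and a dense set would need a distinct point within
   (log 2)/2 of each of these uncountably many measures. *)

Definition dyadic_weight (R : realType) (i : nat) : {nonneg R} :=
  (((2 ^ i.+1)%:R : R)^-1)%:nng.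

Definition dyadic_mixture d (T : measurableType d) (R : realType) (pt : nat -> T) :
    set T -> \bar R :=
  mseries (fun i => mscale (dyadic_weight R i) (\d_(pt i))) 0.

HB.instance Definition _ d (T : measurableType d) (R : realType) (pt : nat -> T) :=
  Measure.copy (dyadic_mixture R pt)
    (mseries (fun i => mscale (dyadic_weight R i) (\d_(pt i))) 0).

Lemma geometric_half_tail (R : realType) (N : nat) :
  (\sum_(N <= k <oo) (((2 ^ k.+1)%:R)^-1 : R)%:E)%E = (((2 ^ N)%:R)^-1 : R)%:E.
Proof.
rewrite -nneseries_addn; last by move=> i; rewrite lee_fin invr_ge0.
apply/cvg_lim => //; move: (@cvg_geometric_eseries_half R 1 N).
rewrite div1r -natrX; apply: cvg_trans; apply: near_eq_cvg; near=> n.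
by apply: eq_bigr => k _; rewrite div1r addnS.
Unshelve. all: by end_near.
Qed.

Section DyadicMixture.
Context d (T : measurableType d) (R : realType) (pt : nat -> T).
Local Notation mu := (dyadic_mixture R pt).

Lemma dyadic_mixtureE (U : set T) :
  mu U = (\sum_(0 <= k <oo) ((2 ^ k.+1)%:R^-1 * (pt k \in U)%:R : R)%:E)%E.
Proof. by []. Qed.

Lemma dyadic_mixture_setT : mu setT = 1%E.
Proof.
rewrite dyadic_mixtureE (eq_eseriesr (g := fun k => (((2 ^ k.+1)%:R)^-1 : R)%:E)).
  by rewrite geometric_half_tail expn0 invr1.
by move=> k _; rewrite in_setT mulr1.
Qed.

Lemma dyadic_mixture_ge_atom (U : set T) (i : nat) :
  pt i \in U -> ((((2 ^ i.+1)%:R)^-1 : R)%:E <= mu U)%E.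
Proof.
move=> Ui; rewrite dyadic_mixtureE.
apply: le_trans (nneseries_lim_ge i.+1 _); last first.
  by move=> n _ _; rewrite lee_fin mulr_ge0 ?invr_ge0.
by rewrite big_nat_recr //= Ui mulr1 leeDr // sume_ge0.
Qed.

Lemma dyadic_mixture_le_tail (U : set T) (N : nat) :
  (forall i, pt i \in U -> (N <= i)%N) -> (mu U <= (((2 ^ N)%:R)^-1 : R)%:E)%E.
Proof.
move=> UN; rewrite dyadic_mixtureE (@nneseries_split _ _ 0 N); last first.
  by move=> k _; rewrite lee_fin mulr_ge0 ?invr_ge0.
rewrite big1_seq ?add0e ?add0n; last first.
  move=> k; rewrite mem_index_iota /= => kN.
  by case: (boolP (pt k \in U)) => [/UN|]; [rewrite leqNgt kN | rewrite mulr0].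
rewrite -geometric_half_tail; apply: lee_nneseries => [k _ _|k _].
  by rewrite lee_fin mulr_ge0 ?invr_ge0.
by rewrite lee_fin; case: (pt k \in U); rewrite ?mulr1 ?mulr0.
Qed.

End DyadicMixture.

HB.instance Definition _ d (T : measurableType d) (R : realType) (pt : nat -> T) :=
  Measure_isProbability.Build _ _ _ (dyadic_mixture R pt) (dyadic_mixture_setT R pt).

Lemma cyl_measurable (A : finType) (a0 : A) n (w : n.-tuple A) :
  measurable (cyl a0 w).
Proof.
have -> : cyl a0 w =
    \bigcap_(i in [set: 'I_n]) (fun x : seqspace a0 => x i) @^-1` [set tnth w i].
  by apply/seteqP; split=> x /= xw i => [_|]; apply: xw.
apply: fin_bigcap_measurable => [|i _]; first exact: finite_finset.
apply: sub_gen_smallest; apply: open_comp; last exact: discrete_open.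
by move=> x _; exact: (@proj_continuous nat (fun=> discrete_topology (alph a0)) i).
Qed.

Lemma size_le_code (s : seq nat) : (size s <= CodeSeq.code s)%N.
Proof.
elim: s => [|n s IH] //=; have := expn_gt0 2 n.
by rewrite /= -!muln2 -addn1; nia.
Qed.

Lemma size_le_pickle (T : countType) (s : seq T) : (size s <= pickle s)%N.
Proof. by have := size_le_code (map pickle s); rewrite size_map. Qed.

Section MarkerPoints.
Variables (A : finType) (a0 b : A).
Hypothesis b_neq_a0 : b != a0.

Definition marker_pos (k : nat) : nat := (2 * k + 2)%N.

Definition word_point (j : nat) : borelX a0 :=
  fun p => nth a0 (odflt [::] (pickle_inv j : option (seq A))) p.

Definition marker_point (k : nat) (bit : bool) : borelX a0 :=
  fun p => if (p == marker_pos k) || (bit && (p == (marker_pos k).+1)) then b else a0.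

Definition mixture_point (t : nat -> bool) (i : nat) : borelX a0 :=
  if odd i then marker_point i./2 (t i./2) else word_point i./2.

Definition marker_word (k : nat) : (marker_pos k).+2.-tuple A :=
  [tuple if val i == marker_pos k then b else a0 | i < (marker_pos k).+2].

Lemma word_point_cyl n (w : n.-tuple A) : cyl a0 w (word_point (pickle (val w))).
Proof. by move=> i; rewrite /word_point pickleK_inv /= (tnth_nth a0). Qed.

Lemma marker_word_pos k (x : borelX a0) : cyl a0 (marker_word k) x ->
  forall p, (p < (marker_pos k).+2)%N -> x p = if p == marker_pos k then b else a0.
Proof. by move=> ux p lt_p; have := ux (Ordinal lt_p); rewrite tnth_mktuple. Qed.

Lemma word_point_marker_cyl k j :
  cyl a0 (marker_word k) (word_point j) -> (marker_pos k < j)%N.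
Proof.
move=> /marker_word_pos /(_ (marker_pos k) (leqnSn _)); rewrite eqxx /word_point.
case js: (pickle_inv j) => [s|] /=; last first.
  by rewrite nth_nil => /eqP; rewrite eq_sym (negbTE b_neq_a0).
move=> nth_b; rewrite -(@pickle_invK (seq A) j) js /=.
apply: leq_trans (size_le_pickle s); rewrite ltnNge.
by apply: contraNN b_neq_a0 => /(nth_default a0); rewrite nth_b => ->.
Qed.

Lemma marker_point_marker_cyl k k' bit :
  cyl a0 (marker_word k) (marker_point k' bit) <-> k' = k /\ bit = false.
Proof.
split=> [/marker_word_pos ux|[-> ->] i]; last by rewrite tnth_mktuple /marker_point orbF.
have b_a0F : (b == a0) = false by exact: negbTE.
have [lt_k'k|lt_kk'|eq_k'k] := ltngtP k' k.
- have lt_pos : (marker_pos k' < (marker_pos k).+2)%N by rewrite /marker_pos; lia.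
  have := ux _ lt_pos; rewrite /marker_point eqxx /=.
  have -> : (marker_pos k' == marker_pos k) = false by apply/negbTE; rewrite /marker_pos; lia.
  by move/eqP; rewrite b_a0F.
- have := ux (marker_pos k) (leqnSn _); rewrite /marker_point eqxx.
  have -> : (marker_pos k == marker_pos k') = false by apply/negbTE; rewrite /marker_pos; lia.
  have -> : (marker_pos k == (marker_pos k').+1) = false.
    by apply/negbTE; rewrite /marker_pos; lia.
  by rewrite andbF => /eqP; rewrite eq_sym b_a0F.
- split=> //; subst k'; apply/negbTE/negP => bit_set.
  have := ux (marker_pos k).+1 (leqnn _); rewrite /marker_point bit_set eqxx orbT.
  by rewrite gtn_eqF // => /eqP; rewrite b_a0F.
Qed.

Lemma mixture_point_marker_cyl (t : nat -> bool) k i : t k ->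
  cyl a0 (marker_word k) (mixture_point t i) -> ((marker_pos k).*2.+2 <= i)%N.
Proof.
rewrite /mixture_point => tk; case: ifPn => [_ /marker_point_marker_cyl [ik tF]|even_i].
  by move: tk; rewrite -ik tF.
move=> /word_point_marker_cyl; rewrite -{2}(odd_double_half i) (negbTE even_i) add0n.
by rewrite -doubleS leq_double.
Qed.

Lemma marker_point_in_mixture (t : nat -> bool) k : ~~ t k ->
  cyl a0 (marker_word k) (mixture_point t (marker_pos k).-1).
Proof.
move=> tkF; have -> : (marker_pos k).-1 = k.*2.+1 by rewrite /marker_pos; lia.
rewrite /mixture_point /= odd_double uphalf_double.
by apply/marker_point_marker_cyl; split=> //; apply/negbTE.
Qed.

End MarkerPoints.

Lemma fully_supported_fine_gt0 (R : realType) (A : finType) (a0 : A)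
    (mu : probability (borelX a0) R) n (w : n.-tuple A) :
  fully_supported mu -> 0 < fine (mu (cyl a0 w)).
Proof.
move=> /(_ n w) mu_gt0; apply: fine_gt0; rewrite mu_gt0.
by rewrite (le_lt_trans (probability_le1 mu (cyl_measurable w))) ?ltey.
Qed.

Lemma proj_dist_ge_term (R : realType) (A : finType) (a0 : A)
    (mu nu : probability (borelX a0) R) n (w : n.+1.-tuple A) :
  (((n.+1%:R)^-1 * `|ln (fine (mu (cyl a0 w)) / fine (nu (cyl a0 w)))|)%:E
    <= proj_dist mu nu)%E.
Proof. by apply: ereal_sup_ubound; exists n, w. Qed.

Lemma norm_ln_ratio_le (R : realType) (x y z : R) : 0 < x -> 0 < y -> 0 < z ->
  `|ln (x / z)| <= `|ln (x / y)| + `|ln (z / y)|.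
Proof.
move=> x_gt0 y_gt0 z_gt0; rewrite !ln_div ?posrE //.
by rewrite (_ : ln x - ln z = (ln x - ln y) - (ln z - ln y)) ?ler_normB // opprB addrA subrK.
Qed.

Lemma ln_ratio_ge (R : realType) n (x z : R) : 0 < z -> (2 ^ n)%:R * z <= x ->
  n%:R * ln 2 <= ln (x / z).
Proof.
move=> z_gt0 le_x; have pow_gt0 : 0 < (2 ^ n)%:R :> R by rewrite ltr0n expn_gt0.
have x_gt0 : 0 < x by apply: lt_le_trans le_x; rewrite mulr_gt0.
rewrite ln_div ?posrE // lerBrDr; rewrite -ler_ln ?posrE ?mulr_gt0 // in le_x.
by rewrite lnM ?posrE // natrX lnXn // in le_x; rewrite mulr_natl.
Qed.

Lemma proj_dist_separated (R : realType) (A : finType) (a0 : A)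
    (mu mu' nu : probability (borelX a0) R) n (w : n.+1.-tuple A) :
  fully_supported mu' -> fully_supported nu ->
  (((2 ^ n.+1)%:R : R)%:E * mu' (cyl a0 w) <= mu (cyl a0 w))%E ->
  (proj_dist mu nu < (ln 2 / 2)%:E)%E -> (proj_dist mu' nu < (ln 2 / 2)%:E)%E ->
  False.
Proof.
move=> mu'_supp nu_supp gap close close'.
have z_gt0 := fully_supported_fine_gt0 w mu'_supp.
have y_gt0 := fully_supported_fine_gt0 w nu_supp.
set x := fine (mu (cyl a0 w)) in close *; set y := fine (nu (cyl a0 w)) in y_gt0 *.
set z := fine (mu' (cyl a0 w)) in z_gt0 *.
have gap_fine : (2 ^ n.+1)%:R * z <= x.
  by rewrite -lee_fin EFinM /x /z !fineK ?fin_num_measure //; exact: cyl_measurable.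
have x_gt0 : 0 < x by apply: lt_le_trans gap_fine; rewrite mulr_gt0 // ltr0n expn_gt0.
have n1_gt0 : 0 < n.+1%:R :> R by [].
have term_lt (m : probability (borelX a0) R) (v : R) :
    (((n.+1%:R)^-1 * v)%:E <= proj_dist m nu)%E ->
    (proj_dist m nu < (ln 2 / 2)%:E)%E -> v < ln 2 / 2 * n.+1%:R.
  move=> le_v lt_v; rewrite -ltr_pdivrMr // mulrC -lte_fin.
  exact: le_lt_trans le_v lt_v.
have xy := term_lt _ _ (proj_dist_ge_term mu nu w) close.
have zy := term_lt _ _ (proj_dist_ge_term mu' nu w) close'.
have := le_trans (ln_ratio_ge z_gt0 gap_fine) (ler_norm _).
move/le_trans/(_ (norm_ln_ratio_le x_gt0 y_gt0 z_gt0))/le_lt_trans/(_ (ltrD xy zy)).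
by rewrite -mulrDl -splitr mulrC ltxx.
Qed.

Lemma bool_seq_not_inj_nat (h : (nat -> bool) -> nat) : ~ injective h.
Proof.
move=> h_inj.
pose r n : nat -> bool := match pselect (exists t, h t = n) with
  | left e => projT1 (cid e) | right _ => fun _ => true end.
have rK t : r (h t) = t.
  rewrite /r; case: pselect => [e|]; last by case; exists t.
  by apply: h_inj; exact: projT2 (cid e).
pose diag k := ~~ r k k.
by have := congr1 (fun f => f (h diag)) (rK diag); rewrite /= /diag; case: (r _ _).
Qed.

Lemma countable_not_inj_bool_seq T (D : set T) (g : (nat -> bool) -> T) :
  countable D -> (forall t, D (g t)) -> ~ injective g.
Proof.
move=> /countable_injP[f f_inj] gD g_inj; apply: (@bool_seq_not_inj_nat (f \o g)).
by move=> s t /f_inj fgst; apply/g_inj/fgst; rewrite in_setE.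
Qed.

Section MarkerMixture.
Variables (R : realType) (A : finType) (a0 b : A).
Hypothesis b_neq_a0 : b != a0.

Definition marker_mixture (t : nat -> bool) : probability (borelX a0) R :=
  dyadic_mixture R (mixture_point a0 b t).

Lemma marker_mixture_fully_supported t : fully_supported (marker_mixture t).
Proof.
move=> n w; have hit : cyl a0 w (mixture_point a0 b t (pickle (val w)).*2).
  by rewrite /mixture_point odd_double doubleK; exact: word_point_cyl.
apply: lt_le_trans (dyadic_mixture_ge_atom _ (mem_set hit)).
by rewrite lte_fin invr_gt0 ltr0n expn_gt0.
Qed.

Lemma marker_mixture_gap (s t : nat -> bool) k : ~~ s k -> t k ->
  (((2 ^ (marker_pos k).+2)%:R : R)%:E * marker_mixture t (cyl a0 (marker_word a0 b k))
    <= marker_mixture s (cyl a0 (marker_word a0 b k)))%E.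
Proof.
move=> skF tk; set m := marker_pos k.
have m_gt0 : (0 < m)%N by rewrite /m /marker_pos addn2.
have low := dyadic_mixture_ge_atom R (mem_set (marker_point_in_mixture b_neq_a0 skF)).
rewrite prednK // in low; apply: le_trans low.
have high : (marker_mixture t (cyl a0 (marker_word a0 b k))
    <= ((2 ^ (m.+2 + m))%:R^-1 : R)%:E)%E.
  apply: dyadic_mixture_le_tail => i /set_mem /(mixture_point_marker_cyl b_neq_a0 tk).
  by rewrite !addSn addnn.
apply: le_trans (lee_wpmul2l _ high) _; first by rewrite lee_fin.
by rewrite -EFinM lee_fin expnD natrM invfM mulrA mulfV ?mul1r // pnatr_eq0 expn_eq0.
Qed.

End MarkerMixture.

Theorem theorem2p2 (R : realType) (A : finType) (a0 : A) (hA : (1 < #|A|)%N) :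
  ~ (exists D : set (probability (borelX a0) R),
       countable D /\ D `<=` @fully_supported R A a0 /\
       (forall mu : probability (borelX a0) R, fully_supported mu ->
          forall e : R, 0 < e ->
          exists2 nu, D nu & (proj_dist mu nu < e%:E)%E)).
Proof.
move=> [D [D_countable [D_supp D_dense]]].
have [b b_neq_a0] : exists b : A, b != a0.
  have /card_gt0P[b] : (0 < #|predC1 a0|)%N by rewrite cardC1 -subn1 subn_gt0.
  by rewrite !inE; exists b.
have e_gt0 : 0 < ln 2 / 2 :> R by rewrite divr_gt0 // ln_gt0 // ltr1n.
have /choice[g g_approx] t :
    exists nu, D nu /\ (proj_dist (marker_mixture R a0 b t) nu < (ln 2 / 2)%:E)%E.
  have [nu Dnu close] := D_dense _ (marker_mixture_fully_supported R a0 b t) _ e_gt0.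
  by exists nu.
have apart (s t : nat -> bool) k : ~~ s k -> t k -> g s <> g t.
  move=> skF tk gst; have [Dgs close_s] := g_approx s.
  have [_] := g_approx t; rewrite -gst => close_t.
  exact: proj_dist_separated (marker_mixture_fully_supported R a0 b t) (D_supp _ Dgs)
    (marker_mixture_gap R b_neq_a0 skF tk) close_s close_t.
apply: (countable_not_inj_bool_seq D_countable (fun t => (g_approx t).1)).
move=> s t gst; apply/funext => k; case sk: (s k); case tk: (t k) => //.
- by case: (apart t s k (negbT tk) sk (esym gst)).
- by case: (apart s t k (negbT sk) tk gst).
Qed.
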